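(* Let $F$ be a DQCNF and let $\varphi$ be an autarky of $F$. Then $\varphi * F$ is satisfiable if and only if $F$ is satisfiable.
   Context: A DQCNF $F$ consists of a finite set $X$ of universal variables, a finite set $Y$ of existential variables (disjoint from $X$), for each $y \in Y$ a dependency set $D(y) \subseteq X$, and a matrix which is a CNF, i.e. a finite set of clauses (finite disjunctions of literals) over the variables $X \cup Y$. $F$ is satisfiable if there are, for each $y \in Y$, boolean functions $f_y$ depending only on the variables in $D(y)$ such that, after substituting $f_y$ for $y$ (and $\neg f_y$ for $\overline{y}$) everywhere, every clause becomes a tautology, i.e. evaluates to true under every assignment of the universal variables. An autarky $\varphi$ of $F$ is a partial assignment that assigns to some set $\mathrm{var}(\varphi) \subseteq Y$ of existential variables boolean functions $\varphi(y)$ depending only on the variables in $D(y)$, such that every clause of $F$ containing a literal whose variable lies in $\mathrm{var}(\varphi)$ becomes a tautology after substituting $\varphi(y)$ for each $y \in \mathrm{var}(\varphi)$, i.e. evaluates to true under every assignment to all universal variables and all existential variables not in $\mathrm{var}(\varphi)$. The DQCNF $\varphi * F$ has the same variables and dependency sets as $F$, and its matrix is obtained from that of $F$ by removing all clauses containing a literal whose variable lies in $\mathrm{var}(\varphi)$ (these are exactly the clauses satisfied by $\varphi$). *)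

From mathcomp Require Import all_boot.
Set Implicit Arguments. Unset Strict Implicit. Unset Printing Implicit Defensive.

(* Variables: universal ones of type X, existential ones of type Y
   (X and Y are finite and disjoint since they are distinct summands of X + Y). *)

(* A literal: a variable together with its polarity (true = positive, false = negated). *)
Definition lit (X Y : finType) := ((X + Y) * bool)%type.
Definition clause (X Y : finType) := seq (lit X Y).

Record dqcnf (X Y : finType) := DQCNF {
  dep : Y -> {set X};
  matrix : seq (clause X Y)
}.

Definition uassign (X : finType) := X -> bool.

Definition depends_only (X : finType) (S : {set X}) (f : uassign X -> bool) : Prop :=
  forall a b : uassign X, (forall x, x \in S -> a x = b x) -> f a = f b.

Definition lit_val (X Y : finType) (a : uassign X) (v : Y -> bool) (l : lit X Y) : bool :=
  match l.1 with
  | inl x => a x == l.2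
  | inr y => v y == l.2
  end.

Definition clause_val (X Y : finType) (a : uassign X) (v : Y -> bool) (C : clause X Y) : bool :=
  has (lit_val a v) C.

Definition satisfiable (X Y : finType) (F : dqcnf X Y) : Prop :=
  exists f : Y -> uassign X -> bool,
    (forall y, depends_only (dep F y) (f y)) /\
    forall C, C \in matrix F -> forall a : uassign X, clause_val a (fun y => f y a) C.

Definition lit_in (X Y : finType) (dom : {set Y}) (l : lit X Y) : bool :=
  match l.1 with
  | inl _ => false
  | inr y => y \in dom
  end.

Definition touches (X Y : finType) (dom : {set Y}) (C : clause X Y) : bool :=
  has (lit_in dom) C.

(* A partial assignment phi with var(phi) = dom; the values of phi outside dom
   are irrelevant. *)
Definition autarky (X Y : finType) (F : dqcnf X Y)
    (dom : {set Y}) (phi : Y -> uassign X -> bool) : Prop :=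
  (forall y, y \in dom -> depends_only (dep F y) (phi y)) /\
  forall C, C \in matrix F -> touches dom C ->
    forall (a : uassign X) (e : Y -> bool),
      clause_val a (fun y => if y \in dom then phi y a else e y) C.

Definition apply_autarky (X Y : finType) (F : dqcnf X Y) (dom : {set Y}) : dqcnf X Y :=
  DQCNF (dep F) [seq C <- matrix F | ~~ touches dom C].

From mathcomp Require Import all_boot.
Set Implicit Arguments. Unset Strict Implicit. Unset Printing Implicit Defensive.

(* Dropping clauses preserves satisfiability.  Conversely, given Skolem
   functions for phi * F, use phi on var(phi) and the given functions
   elsewhere: the clauses touching var(phi) are satisfied by the autarky
   whatever the other existentials are, and the remaining clauses only see
   existentials outside var(phi), where nothing has changed. *)

Lemma satisfiable_submatrix (X Y : finType) (F : dqcnf X Y) (cs : seq (clause X Y)) :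
  {subset cs <= matrix F} -> satisfiable F -> satisfiable (DQCNF (dep F) cs).
Proof.
by move=> sub_cs [f [f_dep f_sat]]; exists f; split=> // C /sub_cs; apply: f_sat.
Qed.

Lemma clause_val_untouched (X Y : finType) (dom : {set Y}) (C : clause X Y)
    (a : uassign X) (v w : Y -> bool) :
  ~~ touches dom C -> (forall y, y \notin dom -> v y = w y) ->
  clause_val a v C = clause_val a w C.
Proof.
move=> /hasPn untouched eq_vw; apply: eq_in_has => -[[x | y] b] /untouched //=.
by rewrite /lit_val /= => /eq_vw ->.
Qed.

Definition extend_by (X Y : finType) (dom : {set Y})
    (phi f : Y -> uassign X -> bool) : Y -> uassign X -> bool :=
  fun y a => if y \in dom then phi y a else f y a.

Lemma satisfiable_autarky_extend (X Y : finType) (F : dqcnf X Y)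
    (dom : {set Y}) (phi : Y -> uassign X -> bool) :
  autarky F dom phi -> satisfiable (apply_autarky F dom) -> satisfiable F.
Proof.
move=> [phi_dep phi_aut] [f [f_dep f_sat]].
exists (extend_by dom phi f); split.
  move=> y a b eq_ab; rewrite /extend_by.
  by case: ifP => [y_dom | _]; [apply: phi_dep | apply: f_dep].
move=> C C_F a; have [C_touched | C_untouched] := boolP (touches dom C).
  exact: phi_aut C C_F C_touched a (f^~ a).
rewrite (clause_val_untouched a (w := f^~ a) C_untouched); last first.
  by move=> y /negbTE y_dom; rewrite /extend_by y_dom.
by apply: f_sat; rewrite mem_filter C_untouched.
Qed.

Theorem lemma1 (X Y : finType) (F : dqcnf X Y)
    (dom : {set Y}) (phi : Y -> uassign X -> bool) :
  autarky F dom phi ->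
  (satisfiable (apply_autarky F dom) <-> satisfiable F).
Proof.
move=> phi_aut; split; first exact: satisfiable_autarky_extend phi_aut.
by apply: satisfiable_submatrix => C; rewrite mem_filter => /andP[].
Qed.
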